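(* The optimal value of problem (P4) (the mixed-autonomy system) is no less than the optimal value of problem (P4) with the additional constraint $z_i=0$ for all $i$ (the human-only system).
   Context: Model: $n$ locations; $\theta_i>0$; $\alpha_{ij}\ge0$ with $\alpha_{ii}=0$, $\sum_j\alpha_{ij}=1$, and the directed graph with adjacency matrix $[\alpha_{ij}]$ strongly connected; $\beta\in(0,1)$; $\omega>0$; $s\ge0$; $F$ a continuous cumulative distribution function with support $[0,\bar p]$. Problem (P4): maximize over $\{p_i,\delta_i,x_i,y_{ij},z_i,r_{ij}\}$ the objective $\sum_i p_i\theta_i(1-F(p_i))-\omega\sum_i\delta_i-s\sum_i z_i$ subject to, for all $i$: $d_i=\theta_i(1-F(p_i))$; $x_i=\beta\big[\sum_j\alpha_{ji}\min\{x_j,d_j\}+\sum_j y_{ji}\big]+\delta_i$; $\sum_j y_{ij}=\max\{x_i-d_i,0\}$; $z_i=\sum_j\alpha_{ji}\max\{d_j-x_j,0\}+\sum_j r_{ji}$; $\sum_j r_{ij}=z_i-\max\{d_i-x_i,0\}$; all variables nonnegative. *)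

From HB Require Import structures.
From mathcomp Require Import all_boot all_order all_algebra.
From mathcomp Require Import all_classical all_reals all_analysis.
Set Implicit Arguments. Unset Strict Implicit. Unset Printing Implicit Defensive.
Import Order.TTheory GRing.Theory Num.Theory.
Import numFieldNormedType.Exports.
Local Open Scope classical_set_scope.
Local Open Scope ring_scope.

Definition cdf_support (R : realType) (F : R -> R) (pbar : R) : Prop :=
  0 < pbar /\
      continuous F /\
      {homo F : a b / a <= b} /\
      (forall t, t <= 0 -> F t = 0) /\
      (forall t, pbar <= t -> F t = 1) /\
      (* every point of [0,pbar] is in the support: F strictly increases
         across every neighbourhood of it *)
      (forall t eps, 0 <= t <= pbar -> 0 < eps -> F (t - eps) < F (t + eps)).

Definition model_assumptions (R : realType) (n : nat) (theta : 'I_n -> R)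
  (alpha : 'I_n -> 'I_n -> R) (beta omega s : R) (F : R -> R) (pbar : R) : Prop :=
  (forall i, 0 < theta i) /\
      (forall i j, 0 <= alpha i j) /\
      (forall i, alpha i i = 0) /\
      (forall i, \sum_(j < n) alpha i j = 1) /\
      (forall i j, connect (fun a b : 'I_n => 0 < alpha a b) i j) /\
      0 < beta < 1 /\
      0 < omega /\
      0 <= s /\
      cdf_support F pbar.

Definition demand (R : realType) (n : nat) (theta : 'I_n -> R) (F : R -> R)
  (p : 'I_n -> R) (i : 'I_n) : R := theta i * (1 - F (p i)).

Definition P4_feasible (R : realType) (n : nat) (theta : 'I_n -> R)
  (alpha : 'I_n -> 'I_n -> R) (beta : R) (F : R -> R)
  (p delta x : 'I_n -> R) (y : 'I_n -> 'I_n -> R) (z : 'I_n -> R)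
  (r : 'I_n -> 'I_n -> R) : Prop :=
  let d := demand theta F p in
  forall i : 'I_n,
  [/\ x i = beta * (\sum_(j < n) alpha j i * Num.min (x j) (d j)
                    + \sum_(j < n) y j i) + delta i,
      \sum_(j < n) y i j = Num.max (x i - d i) 0,
      z i = \sum_(j < n) alpha j i * Num.max (d j - x j) 0 + \sum_(j < n) r j i,
      \sum_(j < n) r i j = z i - Num.max (d i - x i) 0 &
      (0 <= p i /\ 0 <= delta i /\ 0 <= x i /\ 0 <= z i /\
          (forall j, 0 <= y i j) /\ (forall j, 0 <= r i j))].

Definition P4_objective (R : realType) (n : nat) (theta : 'I_n -> R)
  (omega s : R) (F : R -> R) (p delta z : 'I_n -> R) : R :=
  \sum_(i < n) p i * theta i * (1 - F (p i))
  - omega * \sum_(i < n) delta i - s * \sum_(i < n) z i.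

Definition P4_value (R : realType) (n : nat) (theta : 'I_n -> R)
  (alpha : 'I_n -> 'I_n -> R) (beta omega s : R) (F : R -> R)
  (human_only : bool) : \bar R :=
  ereal_sup [set v : \bar R | exists p delta x y z r,
     [/\ P4_feasible theta alpha beta F p delta x y z r,
         (human_only -> forall i, z i = 0) &
         v = (P4_objective theta omega s F p delta z)%:E]].

From HB Require Import structures.
From mathcomp Require Import all_boot all_order all_algebra.
From mathcomp Require Import all_classical all_reals all_analysis.
Import Order.TTheory GRing.Theory Num.Theory.
Local Open Scope ring_scope.
Local Open Scope ereal_scope.

Lemma P4_value_human_only_le (R : realType) (n : nat) (theta : 'I_n -> R)
  (alpha : 'I_n -> 'I_n -> R) (beta omega s : R) (F : R -> R) :
  P4_value theta alpha beta omega s F true <= P4_value theta alpha beta omega s F false.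
Proof.
apply: ereal_sup_le => _ [p [delta [x [y [z [r [feas _ ->]]]]]]].
by exists p, delta, x, y, z, r.
Qed.

Theorem corollary1 (R : realType) (n : nat) (theta : 'I_n -> R)
  (alpha : 'I_n -> 'I_n -> R) (beta omega s : R) (F : R -> R) (pbar : R) :
  model_assumptions theta alpha beta omega s F pbar ->
  P4_value theta alpha beta omega s F true <= P4_value theta alpha beta omega s F false.
Proof. by move=> _; exact: P4_value_human_only_le. Qed.
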